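(* $D(18,\{3,4\})\ge 30$; equivalently, every $\{K_3,K_4\}$-decomposition of $K_{18}$ has $\alpha\ge 9$.
   Context: A $\{K_3,K_4\}$-decomposition of $K_v$ is a collection of subgraphs, each isomorphic to $K_3$ or $K_4$, such that every edge of $K_v$ lies in exactly one of them. $\alpha$ and $\beta$ denote the numbers of copies of $K_3$ and $K_4$ in the decomposition (so $3\alpha+6\beta=\binom{v}{2}$). $D(v,\{3,4\})$ is the minimum of $\alpha+\beta$ over all such decompositions of $K_v$. *)

From mathcomp Require Import all_boot.
Set Implicit Arguments. Unset Strict Implicit. Unset Printing Implicit Defensive.

(* A subgraph of K_v isomorphic to K_3 or K_4 is a
   complete subgraph, hence determined by its vertex set (of size 3 or 4).  Since every block contains
   an edge, no block can be repeated, so a set of blocks suffices. *)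
Definition K34_decomposition (v : nat) (B : {set {set 'I_v}}) : Prop :=
  (forall b, b \in B -> #|b| = 3 \/ #|b| = 4) /\
  (forall x y : 'I_v, x != y ->
     exists! b, b \in B /\ x \in b /\ y \in b).

Definition alpha (v : nat) (B : {set {set 'I_v}}) : nat :=
  #|[set b in B | #|b| == 3]|.
Definition beta (v : nat) (B : {set {set 'I_v}}) : nat :=
  #|[set b in B | #|b| == 4]|.

Definition D34_ge (v m : nat) : Prop :=
  forall B : {set {set 'I_v}}, K34_decomposition B -> m <= alpha B + beta B.

From mathcomp Require Import all_boot zify.
Set Implicit Arguments. Unset Strict Implicit. Unset Printing Implicit Defensive.

(* Counting the edges at a vertex x of K_18 gives 2 t_x + 3 k_x = 17, where t_x
   and k_x are the numbers of triangles and K_4's through x; summing over x gives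
   alpha + 2 beta = 51, so alpha + beta >= 30 is equivalent to alpha >= 9.
   Each t_x is 1, 4 or 7 and alpha is odd, so alpha <= 8 forces alpha = 7, with
   one vertex w on four triangles and every other vertex on exactly one.
   Let A be the 8 vertices sharing a triangle with w and C the 9 others.  A
   vertex of A lies on 5 K_4's avoiding w, which meet A in 11 points in all; a
   vertex of C lies on 4 of them, meeting A in 8 points.  Double counting over
   these 19 K_4's b gives sum |b & A| = 40 and sum |b & A|^2 = 88, and parity
   then forces all |b & A| into {1,2,3}, with exactly one b1 meeting A once.
   Through a point of b1 & A passes such a K_4 b with |b & A| = 3, and the
   fourth vertex of b must then lie in b1, so b and b1 share an edge. *)

Section NatSums.
Variables (I : finType) (P : pred I).

Lemma exists_gt_of_sum_gt (F : I -> nat) m :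
  m * \sum_(i | P i) 1 < \sum_(i | P i) F i -> exists2 i, P i & m < F i.
Proof.
case: (pickP [pred i | P i && (m < F i)]) => [i /andP[] | none]; first by exists i.
rewrite big_distrr ltnNge leq_sum // => i Pi.
by move: (none i); rewrite /= Pi muln1 => /negbT; rewrite -leqNgt.
Qed.

Lemma exists_lt_of_sum_lt (F : I -> nat) m :
  \sum_(i | P i) F i < m * \sum_(i | P i) 1 -> exists2 i, P i & F i < m.
Proof.
case: (pickP [pred i | P i && (F i < m)]) => [i /andP[] | none]; first by exists i.
rewrite big_distrr ltnNge leq_sum // => i Pi.
by move: (none i); rewrite /= Pi muln1 => /negbT; rewrite -leqNgt.
Qed.

Lemma exists_odd_of_sum_odd (F : I -> nat) :
  odd (\sum_(i | P i) F i) -> exists2 i, P i & odd (F i).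
Proof.
case: (pickP [pred i | P i && odd (F i)]) => [i /andP[] | none]; first by exists i.
suff: ~~ odd (\sum_(i | P i) F i) by move/negbTE->.
apply: (big_ind (fun n => ~~ odd n)) => // [m n|i Pi].
  by rewrite oddD => /negbTE-> /negbTE->.
by move: (none i); rewrite /= Pi => /negbT.
Qed.

Lemma moments_profile (f : I -> nat) :
    (forall i, P i -> f i <= 4) ->
    \sum_(i | P i) 1 = 19 -> \sum_(i | P i) f i = 40 ->
    \sum_(i | P i) f i * f i = 88 -> 8 <= \sum_(i | P i) f i * odd (f i) ->
  [/\ \sum_(i | P i) (f i == 0) = 0, \sum_(i | P i) (f i == 4) = 0
    & \sum_(i | P i) (f i == 1) = 1].
Proof.
(* With N k = #{i | f i = k}: sum (f i - 2)^2 = 4, so either one f i lies in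
   {0, 4} and no f i is odd, or all lie in {1, 2, 3}; the parity bound rules out
   the first case, and sum (f i - 2) = 2 then gives N 1 = 1. *)
move=> f_le4 cnt sum1 sum2 sum_odd; pose N k := \sum_(i | P i) (f i == k).
have moment (g : nat -> nat) : \sum_(i | P i) g (f i) =
    g 0 * N 0 + g 1 * N 1 + g 2 * N 2 + g 3 * N 3 + g 4 * N 4.
  rewrite /N !big_distrr -!big_split /=; apply: eq_bigr => i /f_le4.
  by case: (f i) => [|[|[|[|[|]]]]] //= _; rewrite !(muln0, muln1, addn0, add0n).
rewrite (moment (fun=> 1)) in cnt; rewrite (moment (fun n => n)) in sum1.
rewrite (moment (fun n => n * n)) in sum2.
rewrite (moment (fun n => n * odd n)) in sum_odd.
suff: [/\ N 0 = 0, N 4 = 0 & N 1 = 1] by []; clearbody N; split; lia.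
Qed.

End NatSums.

Lemma cardsD1_in (T : finType) (x : T) (X : {set T}) :
  x \in X -> #|X :\ x| = #|X|.-1.
Proof. by move=> xX; rewrite [#|X|](cardsD1 x) xX. Qed.

Lemma sum_cardsI_mul (T : finType) (P : pred {set T}) (X : {set T})
    (F : {set T} -> nat) :
  \sum_(b | P b) #|b :&: X| * F b = \sum_(x in X) \sum_(b | P b && (x \in b)) F b.
Proof.
rewrite (exchange_big_dep P) /= => [|x b _ /andP[] //].
apply: eq_bigr => b Pb; rewrite -sum_nat_const; apply: eq_bigl => x.
by rewrite !inE Pb andbC.
Qed.

Lemma sum_cardsI (T : finType) (P : pred {set T}) (X : {set T}) :
  \sum_(b | P b) #|b :&: X| = \sum_(x in X) \sum_(b | P b && (x \in b)) 1.
Proof. by rewrite -sum_cardsI_mul; apply: eq_bigr => b _; rewrite muln1. Qed.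

Section Decomposition.
Variables (v : nat) (B : {set {set 'I_v}}).
Hypothesis decB : K34_decomposition B.

Definition nblocks x := \sum_(b in B | x \in b) 1.
Definition ntri x := \sum_(b in B | x \in b) (#|b| == 3).
Definition nK4 x := \sum_(b in B | x \in b) (#|b| == 4).

Lemma block_card b : b \in B -> #|b| = 3 \/ #|b| = 4.
Proof. exact: decB.1. Qed.

Lemma block_eq x y b1 b2 : x != y -> b1 \in B -> b2 \in B ->
  x \in b1 -> y \in b1 -> x \in b2 -> y \in b2 -> b1 = b2.
Proof.
move=> xy b1B b2B xb1 yb1 xb2 yb2; have [b [_ uniq_b]] := decB.2 x y xy.
by rewrite -(uniq_b b1) ?(uniq_b b2).
Qed.

Lemma nblocks_pair x y : x != y ->
  \sum_(b | (b \in B) && (x \in b) && (y \in b)) 1 = 1.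
Proof.
move=> xy; have [b [[bB [xb yb]] _]] := decB.2 x y xy.
apply/eqP/sum_nat_eq1; exists b; split=> // [|b' b'b /andP[/andP[b'B xb'] yb']].
  by rewrite bB xb yb.
by case/eqP: b'b; exact: block_eq xy b'B bB xb' yb' xb yb.
Qed.

Lemma nblocksE x : nblocks x = ntri x + nK4 x.
Proof.
rewrite -big_split; apply: eq_bigr => b /andP[bB _].
by case: (block_card bB) => ->.
Qed.

Lemma unique_triangle_at x : ntri x = 1 ->
  exists T, [/\ T \in B, #|T| = 3, x \in T
              & forall T', T' \in B -> #|T'| = 3 -> x \in T' -> T' = T].
Proof.
move/eqP/sum_nat_eq1 => [T [/andP[TB xT] + others]]; case: eqP => // T3 _.
exists T; split=> // T' T'B T'3 xT'; case: (eqVneq T' T) => // /others.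
by rewrite T'B xT' T'3 eqxx => /(_ isT).
Qed.

Lemma sum_blocks_at_cardsI x U :
  \sum_(b in B | x \in b) #|b :&: U| = #|U :\ x| + (x \in U) * nblocks x.
Proof.
rewrite sum_cardsI (bigID (pred1 x)) /= addnC; congr (_ + _).
  rewrite -sum1_card; apply: eq_big => [y | y /andP[yU yx]].
    by rewrite !inE andbC.
  by apply: nblocks_pair; rewrite eq_sym.
case: (boolP (x \in U)) => xU.
  rewrite mul1n (big_pred1 x) => [|y /=].
    by apply: eq_bigl => b; rewrite -andbA andbb.
  by case: eqP => [->|]; rewrite ?andbT ?andbF.
by rewrite big_pred0 // => y; case: eqP => [->|]; rewrite ?andbF ?(negbTE xU).
Qed.

Lemma ntri_nK4_at x : 2 * ntri x + 3 * nK4 x = v.-1.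
Proof.
have := sum_blocks_at_cardsI x setT.
rewrite in_setT mul1n nblocksE setTD cardsC1 card_ord.
have -> : \sum_(b in B | x \in b) #|b :&: setT| = 3 * ntri x + 4 * nK4 x.
  rewrite !big_distrr -big_split; apply: eq_bigr => b /andP[bB _].
  by rewrite setIT; case: (block_card bB) => ->.
lia.
Qed.

Lemma sum_blocks_card_eq k :
  \sum_x \sum_(b in B | x \in b) (#|b| == k) = k * #|[set b in B | #|b| == k]|.
Proof.
transitivity (\sum_(x in [set: 'I_v]) \sum_(b | (b \in B) && (x \in b)) (#|b| == k)).
  by apply: eq_bigl => x; rewrite in_setT.
rewrite -sum_cardsI_mul -sum1dep_card big_distrr big_mkcondr /=.
by apply: eq_bigr => b _; rewrite setIT; case: eqP => [->|]; rewrite ?muln0 ?muln1.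
Qed.

Lemma alpha_beta_edges : 3 * alpha B + 6 * beta B = 'C(v, 2).
Proof.
have sum_at : \sum_(x < v) (2 * ntri x + 3 * nK4 x) = v * v.-1.
  by rewrite (eq_bigr _ (fun x _ => ntri_nK4_at x)) big_const_ord iter_addn_0 mulnC.
rewrite big_split -!big_distrr /= !sum_blocks_card_eq -/(alpha B) -/(beta B) in sum_at.
rewrite bin2 -sum_at.
have -> : 2 * (3 * alpha B) + 3 * (4 * beta B) = (3 * alpha B + 6 * beta B).*2 by lia.
by rewrite doubleK.
Qed.

End Decomposition.

Section K18.
Variable B : {set {set 'I_18}}.
Hypothesis decB : K34_decomposition B.

Lemma alpha_2beta : alpha B + 2 * beta B = 51.
Proof. by have := alpha_beta_edges decB; have -> : 'C(18, 2) = 153 by []; lia. Qed.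

Lemma ntri_18 x : ntri B x = 1 \/ ntri B x = 4 \/ ntri B x = 7.
Proof. by have := ntri_nK4_at decB x; lia. Qed.

Lemma nK4_18 x : ntri B x = 1 -> nK4 B x = 5.
Proof. by have := ntri_nK4_at decB x; lia. Qed.

Lemma alpha_le8_profile : alpha B <= 8 ->
  exists w, ntri B w = 4 /\ forall x, x != w -> ntri B x = 1.
Proof.
move=> alpha_le8.
have ntri_ge1 x : 1 <= ntri B x by case: (ntri_18 x) => [|[]] ->.
have sum_ntri : \sum_(x < 18) ntri B x = 3 * alpha B := sum_blocks_card_eq B 3.
have sum_one : \sum_(x < 18) 1 = 18 by rewrite big_const_ord iter_addn_0.
have alpha_ge6 : 18 <= 3 * alpha B.
  by rewrite -sum_ntri -[X in X <= _]sum_one; apply: leq_sum => x _.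
have sum_excess : \sum_(x < 18) (ntri B x - 1) = 3.
  by rewrite sumnB // sum_ntri sum_one; have := alpha_2beta; lia.
have [w _ w_excess] : exists2 w, true & 0 < ntri B w - 1.
  by apply: exists_gt_of_sum_gt; rewrite sum_excess mul0n.
rewrite (bigD1 w) //= in sum_excess.
have ntri_w : ntri B w = 4.
  by case: (ntri_18 w) w_excess sum_excess => [|[]] ->; lia.
exists w; split=> // x xw.
set others := \sum_(i < 18 | _) _ in sum_excess.
have /eqP : others = 0 by rewrite ntri_w in sum_excess; lia.
rewrite sum_nat_eq0 => /forall_inP/(_ x xw).
by case: (ntri_18 x) => [|[]] ->.
Qed.

End K18.

Section ExceptionalVertex.
Variables (B : {set {set 'I_18}}) (w : 'I_18).
Hypotheses (decB : K34_decomposition B) (ntri_w : ntri B w = 4)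
  (ntri_other : forall x, x != w -> ntri B x = 1).

Definition tri_nbhd : {set 'I_18} :=
  [set y | (y != w) && [exists T in B, [&& #|T| == 3, w \in T & y \in T]]].

Definition K4_off (b : {set 'I_18}) := [&& b \in B, #|b| == 4 & w \notin b].

Local Notation A := tri_nbhd.
Local Notation C := (~: (w |: tri_nbhd)).

Lemma tri_nbhdP y :
  reflect (y != w /\ exists T, [/\ T \in B, #|T| = 3, w \in T & y \in T]) (y \in A).
Proof.
rewrite inE; apply: (iffP andP) => [[yw /existsP[T /and4P[TB /eqP T3 wT yT]]] |].
  by split=> //; exists T.
case=> yw [T [TB T3 wT yT]]; split=> //; apply/existsP; exists T.
by rewrite TB T3 eqxx wT yT.
Qed.

Lemma w_notin_A : w \notin A.
Proof. by apply/negP => /tri_nbhdP[]; rewrite eqxx. Qed.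

Lemma triangle_eq_off_w x T1 T2 : x != w -> T1 \in B -> T2 \in B ->
  #|T1| = 3 -> #|T2| = 3 -> x \in T1 -> x \in T2 -> T1 = T2.
Proof.
move=> xw T1B T2B T13 T23 xT1 xT2.
have [T [_ _ _ T_uniq]] := unique_triangle_at (ntri_other xw).
by rewrite (T_uniq T1) // (T_uniq T2).
Qed.

Lemma triangle_w_setIA T : T \in B -> #|T| = 3 -> w \in T -> T :&: A = T :\ w.
Proof.
move=> TB T3 wT; apply/setP => y; rewrite in_setI in_setD1.
case: (eqVneq y w) => [-> | yw] /=; first by rewrite (negbTE w_notin_A) andbF.
by case: (boolP (y \in T)) => //= yT; apply/tri_nbhdP; split=> //; exists T.
Qed.

Lemma K4_w_setIA b : b \in B -> #|b| = 4 -> w \in b -> b :&: A = set0.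
Proof.
move=> bB b4 wb; apply/setP => y; rewrite in_setI in_set0.
apply/negP => /andP[yb /tri_nbhdP[yw [T [TB T3 wT yT]]]].
have wy : w != y by rewrite eq_sym.
by move: b4; rewrite (block_eq decB wy bB TB wb yb wT yT) T3.
Qed.

Lemma card_A : #|A| = 8.
Proof.
have := sum_blocks_at_cardsI decB w A.
rewrite (negbTE w_notin_A) mul0n addn0 [#|A|](cardsD1 w) (negbTE w_notin_A) => <-.
transitivity (2 * ntri B w); last by rewrite ntri_w.
rewrite big_distrr; apply: eq_bigr => b /andP[bB wb].
case: (block_card decB bB) => b_card; rewrite b_card /=.
  by rewrite triangle_w_setIA // cardsD1_in // b_card.
by rewrite K4_w_setIA // cards0.
Qed.

Lemma nblocks_off_w x : x != w -> nblocks B x = 6.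
Proof.
by move=> xw; rewrite (nblocksE decB) (nK4_18 decB (ntri_other xw)) ntri_other.
Qed.

Lemma K4_offN b : b \in B -> ~~ K4_off b = (#|b| == 3) || (w \in b).
Proof.
by move=> bB; rewrite /K4_off bB; case: (block_card decB bB) => -> /=; rewrite ?negbK.
Qed.

Lemma sum_blocks_at_K4_off x F :
  \sum_(b in B | x \in b) F b =
  \sum_(b in B | (x \in b) && ~~ K4_off b) F b + \sum_(b | K4_off b && (x \in b)) F b.
Proof.
rewrite (bigID K4_off) addnC /=; congr (_ + _); apply: eq_bigl => b.
  by rewrite /K4_off; case: (b \in B); case: (x \in b); rewrite ?andbF ?andbT.
by rewrite andbA.
Qed.

Lemma K4_off_at_A a : a \in A ->
  \sum_(b | K4_off b && (a \in b)) 1 = 5 /\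
  \sum_(b | K4_off b && (a \in b)) #|b :&: A| = 11.
Proof.
move=> aA; have /tri_nbhdP[aw [T [TB T3 wT aT]]] := aA.
have not_off b : b \in B -> a \in b -> ~~ K4_off b = (b == T).
  move=> bB ab; rewrite K4_offN //; apply/idP/eqP => [/orP[/eqP b3 | wb] | ->].
  - exact: triangle_eq_off_w aw bB TB b3 T3 ab aT.
  - exact: (block_eq decB aw bB TB ab wb aT wT).
  - by rewrite T3 eqxx.
have sum_at F : \sum_(b in B | a \in b) F b =
                F T + \sum_(b | K4_off b && (a \in b)) F b.
  rewrite sum_blocks_at_K4_off (big_pred1 T) // => b /=.
  apply/and3P/eqP => [[bB ab] | ->]; first by rewrite not_off // => /eqP.
  by rewrite TB aT not_off.
have := sum_at (fun=> 1); rewrite -/(nblocks B a) nblocks_off_w //.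
have := sum_at (fun b => #|b :&: A|); rewrite sum_blocks_at_cardsI // aA mul1n.
rewrite nblocks_off_w // cardsD1_in // card_A triangle_w_setIA // cardsD1_in // T3.
by move=> /= sum_ia sum_one; split; [clear -sum_one | clear -sum_ia]; lia.
Qed.

Lemma K4_off_at_C c : c != w -> c \notin A ->
  \sum_(b | K4_off b && (c \in b)) 1 = 4 /\
  \sum_(b | K4_off b && (c \in b)) #|b :&: A| = 8.
Proof.
move=> cw cA.
have [T [TB T3 cT _]] := unique_triangle_at (ntri_other cw).
have wc : w != c by rewrite eq_sym.
have [bw [[bwB [wbw cbw]] _]] := decB.2 w c wc.
have bw4 : #|bw| = 4.
  case: (block_card decB bwB) => // bw3; case/negP: cA.
  by apply/tri_nbhdP; split=> //; exists bw.
have TA : T :&: A = set0.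
  apply/setP => y; rewrite in_setI in_set0.
  apply/negP => /andP[yT /tri_nbhdP[yw [Ty [TyB Ty3 wTy yTy]]]].
  have T_Ty := triangle_eq_off_w yw TB TyB T3 Ty3 yT yTy.
  by case/negP: cA; apply/tri_nbhdP; split=> //; exists Ty; split=> //; rewrite -T_Ty.
have T_ne_bw : T != bw by apply/eqP => T_bw; move: T3; rewrite T_bw bw4.
have not_off b : b \in B -> c \in b -> ~~ K4_off b = (b == T) || (b == bw).
  move=> bB cb; rewrite K4_offN //.
  apply/orP/orP => [[/eqP b3 | wb] | [/eqP -> | /eqP ->]].
  - by left; apply/eqP; apply: triangle_eq_off_w cw bB TB b3 T3 cb cT.
  - by right; apply/eqP; exact: (block_eq decB cw bB bwB cb wb cbw wbw).
  - by left; rewrite T3.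
  - by right.
have sum_at F : \sum_(b in B | c \in b) F b =
                F T + F bw + \sum_(b | K4_off b && (c \in b)) F b.
  rewrite sum_blocks_at_K4_off (bigD1 T) /=; last by rewrite TB cT not_off // eqxx.
  rewrite (big_pred1 bw) ?addnA // => b /=.
  apply/idP/eqP => [/andP[/and3P[bB cb]] | ->].
    by rewrite not_off // => /orP[/eqP -> | /eqP //]; rewrite eqxx.
  by rewrite bwB cbw not_off // eqxx orbT eq_sym T_ne_bw.
have := sum_at (fun=> 1); rewrite -/(nblocks B c) nblocks_off_w //.
have := sum_at (fun b => #|b :&: A|); rewrite sum_blocks_at_cardsI // (negbTE cA).
have -> : #|A :\ c| = #|A| by rewrite [#|A|](cardsD1 c) (negbTE cA).
rewrite mul0n addn0 TA K4_w_setIA // cards0 card_A.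
by move=> /= sum_ia sum_one; split; [clear -sum_one | clear -sum_ia]; lia.
Qed.

Lemma card_C : #|C| = 9.
Proof.
by have := cardsC (w |: A); rewrite cardsU1 w_notin_A card_A card_ord; lia.
Qed.

Lemma K4_off_cardsI b : K4_off b -> #|b :&: A| + #|b :&: C| = 4.
Proof.
case/and3P=> _ /eqP b4 wb; apply: etrans b4; rewrite -(cardsID A b); congr (_ + _).
apply: eq_card => y; rewrite in_setI in_setD in_setC in_setU1 negb_or.
by case: (eqVneq y w) => [-> | _] /=; rewrite ?(negbTE wb) ?andbF // andbC.
Qed.

Lemma sum_K4_off_cardsI_A : \sum_(b | K4_off b) #|b :&: A| = 40.
Proof.
rewrite sum_cardsI (eq_bigr (fun=> 5)) => [|a aA]; last by case: (K4_off_at_A aA).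
by rewrite sum_nat_const card_A.
Qed.

Lemma sum_K4_off_cardsI_A_sq :
  \sum_(b | K4_off b) #|b :&: A| * #|b :&: A| = 88.
Proof.
rewrite sum_cardsI_mul (eq_bigr (fun=> 11)) => [|a aA]; last by case: (K4_off_at_A aA).
by rewrite sum_nat_const card_A.
Qed.

Lemma sum_K4_off_odd : 8 <= \sum_(b | K4_off b) #|b :&: A| * odd #|b :&: A|.
Proof.
rewrite sum_cardsI_mul; apply: (@leq_trans (\sum_(a in A) 1)).
  by rewrite sum1_card card_A.
apply: leq_sum => a aA; have [_ /(congr1 odd) /= sum_odd] := K4_off_at_A aA.
have [b /andP[bK ab] odd_b] := exists_odd_of_sum_odd sum_odd.
by rewrite (bigD1 b) ?bK ?ab //= odd_b.
Qed.

Lemma K4_off_count : \sum_(b | K4_off b) 1 = 19.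
Proof.
have sum_C : \sum_(b | K4_off b) #|b :&: C| = 36.
  rewrite sum_cardsI (eq_bigr (fun=> 4)) => [|c].
    by rewrite sum_nat_const card_C.
  by rewrite in_setC in_setU1 negb_or => /andP[cw cA]; case: (K4_off_at_C cw cA).
have : \sum_(b | K4_off b) (#|b :&: A| + #|b :&: C|) = 4 * \sum_(b | K4_off b) 1.
  by rewrite big_distrr; apply: eq_bigr => b /K4_off_cardsI ->.
rewrite big_split /= sum_K4_off_cardsI_A sum_C; lia.
Qed.

Lemma K4_off_profile :
  [/\ forall b, K4_off b -> 0 < #|b :&: A| < 4
    & exists b1, K4_off b1 /\
        forall b, K4_off b -> (#|b :&: A| == 1) = (b == b1)].
Proof.
have le4 b : K4_off b -> #|b :&: A| <= 4.
  by case/and3P=> _ /eqP b4 _; rewrite -[X in _ <= X]b4 subset_leq_card ?subsetIl.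
have [no0 no4 one1] := moments_profile le4 K4_off_count sum_K4_off_cardsI_A
  sum_K4_off_cardsI_A_sq sum_K4_off_odd.
split=> [b bK | ].
  move: no0 no4 => /eqP + /eqP; rewrite !sum_nat_eq0.
  move=> /forall_inP/(_ b bK) + /forall_inP/(_ b bK); rewrite !eqb0 => ne0 ne4.
  by have := le4 b bK; lia.
have /sum_nat_eq1[b1 [b1K + others]] := introT eqP one1.
move=> /eqP; rewrite eqb1 => b1_1; exists b1; split=> // b bK.
case: (eqVneq b b1) => [-> // | b_ne_b1].
by apply/negbTE; rewrite -eqb0; apply/eqP/others.
Qed.

Lemma exceptional_vertex_absurd : False.
Proof.
have [mid [b1 [b1K b1_uniq]]] := K4_off_profile.
have b1_1 : #|b1 :&: A| = 1 by apply/eqP; rewrite b1_uniq.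
have [a0 a0b1 a0A] : exists2 a0, a0 \in b1 & a0 \in A.
  have /set0Pn[a0] : b1 :&: A != set0 by rewrite -card_gt0 b1_1.
  by rewrite in_setI => /andP[]; exists a0.
have [b /andP[/andP[bK a0b] b_ne_b1] b_gt2] :
    exists2 b, K4_off b && (a0 \in b) && (b != b1) & 2 < #|b :&: A|.
  have [cnt sum] := K4_off_at_A a0A.
  have b1P : K4_off b1 && (a0 \in b1) by rewrite b1K a0b1.
  rewrite (bigD1 b1 b1P) /= in cnt; rewrite (bigD1 b1 b1P) /= b1_1 in sum.
  apply: exists_gt_of_sum_gt; move: cnt sum.
  by set n := \sum_(i | _) 1; set s := \sum_(i | _) _; clear; lia.
have [c cb cC] : exists2 c, c \in b & c \in C.
  have : 0 < #|b :&: C| by have := K4_off_cardsI bK; have := mid b bK; clear; lia.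
  by rewrite card_gt0 => /set0Pn[c]; rewrite in_setI => /andP[]; exists c.
move: cC; rewrite in_setC in_setU1 negb_or => /andP[cw cA].
have cb1 : c \in b1.
  have b3 : #|b :&: A| = 3 by have := mid b bK; clear -b_gt2; lia.
  have [cnt sum] := K4_off_at_C cw cA.
  have bP : K4_off b && (c \in b) by rewrite bK cb.
  rewrite (bigD1 b bP) /= in cnt; rewrite (bigD1 b bP) /= b3 in sum.
  have [b' /andP[/andP[b'K cb'] _] b'_lt2] :
      exists2 b', K4_off b' && (c \in b') && (b' != b) & #|b' :&: A| < 2.
    apply: exists_lt_of_sum_lt; move: cnt sum.
    by set n := \sum_(i | _) 1; set s := \sum_(i | _) _; clear; lia.
  have : #|b' :&: A| == 1 by apply/eqP; have := mid b' b'K; clear -b'_lt2; lia.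
  by rewrite b1_uniq // => /eqP <-.
have a0c : a0 != c by apply: contraNneq cA => <-.
have bB : b \in B by case/and3P: bK.
have b1B : b1 \in B by case/and3P: b1K.
by case/eqP: b_ne_b1; exact: (block_eq decB a0c bB b1B a0b cb a0b1 cb1).
Qed.

End ExceptionalVertex.

Lemma alpha_ge9 (B : {set {set 'I_18}}) : K34_decomposition B -> 9 <= alpha B.
Proof.
move=> decB; rewrite leqNgt; apply/negP => alpha_le8.
have [w [ntri_w ntri_other]] := alpha_le8_profile decB alpha_le8.
exact: exceptional_vertex_absurd decB ntri_w ntri_other.
Qed.

Theorem mainTheorem4 :
  D34_ge 18 30 /\
  (forall B : {set {set 'I_18}}, K34_decomposition B -> 9 <= alpha B).
Proof.
split=> [B decB | ]; last exact: alpha_ge9.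
by have := alpha_2beta decB; have := alpha_ge9 decB; lia.
Qed.
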